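(* If $m$ is even and $\mathcal{H}\in\operatorname{H}^m(\mathbb{C}^n)$ is generic, then $\operatorname{rank}(\mathcal{H})=\operatorname{rank}_S(\mathcal{H})=\underline{\operatorname{rank}}(\mathcal{H})=\underline{\operatorname{rank}}_S(\mathcal{H})=\operatorname{rank}_V(\mathcal{H})=1+\frac{(n-1)m}{2}.$
   Context: A tensor $\mathcal{H}\in\operatorname{T}^m(\mathbb{C}^n)$ is Hankel if there is a vector $h=(h_0,\dots,h_{(n-1)m})$ with $\mathcal{H}_{i_1\dots i_m}=h_{i_1+\cdots+i_m-m}$; $\operatorname{H}^m(\mathbb{C}^n)\cong\mathbb{C}^{(n-1)m+1}$ is the space of such tensors, and ''generic'' means outside a proper Zariski-closed subset. Ranks: cp rank $\operatorname{rank}(\mathcal{A})$ = least $r$ with $\mathcal{A}=\sum_{i=1}^r u_{i,1}\otimes\cdots\otimes u_{i,m}$; border rank $\underline{\operatorname{rank}}(\mathcal{A})$ = least $r$ such that $\mathcal{A}$ is a limit of such sums of $r$ terms; symmetric rank $\operatorname{rank}_S$ and symmetric border rank $\underline{\operatorname{rank}}_S$ are defined the same way with terms $u_i^{\otimes m}$; Vandermonde rank $\operatorname{rank}_V(\mathcal{H})$ = least $r$ with $\mathcal{H}=\sum_{i=1}^r(a_i^{n-1},a_i^{n-2}b_i,\dots,b_i^{n-1})^{\otimes m}$, $a_i,b_i\in\mathbb{C}$. *)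

(* The field of scalars is an arbitrary numClosedFieldType
   (algebraically closed field with a norm / order, e.g. the complex numbers). *)
From HB Require Import structures.
From mathcomp Require Import all_boot all_order all_algebra.
Set Implicit Arguments. Unset Strict Implicit. Unset Printing Implicit Defensive.
Import Order.TTheory GRing.Theory Num.Theory.
Local Open Scope ring_scope.

(* T^m(C^n): order-m tensors with indices in {0,..,n-1} (0-based). *)
Definition tensor (C : Type) (m n : nat) := {ffun {ffun 'I_m -> 'I_n} -> C}.

Definition cp_sum (C : numClosedFieldType) (m n r : nat)
  (U : 'I_r -> 'I_m -> 'I_n -> C) : tensor C m n :=
  [ffun idx : {ffun 'I_m -> 'I_n} => \sum_(i < r) \prod_(j < m) U i j (idx j)].

Definition sym_sum (C : numClosedFieldType) (m n r : nat)
  (u : 'I_r -> 'I_n -> C) : tensor C m n :=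
  cp_sum (fun i (_ : 'I_m) => u i).

Definition vand_vec (C : numClosedFieldType) (n : nat) (a b : C) : 'I_n -> C :=
  fun k => a ^+ (n.-1 - k) * b ^+ k.

Definition vand_sum (C : numClosedFieldType) (m n r : nat) (a b : 'I_r -> C)
  : tensor C m n := @sym_sum C m n r (fun i => @vand_vec C n (a i) (b i)).

Definition tensor_limit (C : numClosedFieldType) (m n : nat)
  (T : nat -> tensor C m n) (A : tensor C m n) : Prop :=
  forall eps : C, 0 < eps -> exists N : nat, forall k : nat, (N <= k)%N ->
    forall idx, `|T k idx - A idx| < eps.

Definition has_cp (C : numClosedFieldType) (m n : nat) (r : nat) (A : tensor C m n) :=
  exists U : 'I_r -> 'I_m -> 'I_n -> C, A = cp_sum U.
Definition has_sym (C : numClosedFieldType) (m n : nat) (r : nat) (A : tensor C m n) :=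
  exists u : 'I_r -> 'I_n -> C, A = sym_sum m u.
Definition has_border (C : numClosedFieldType) (m n : nat) (r : nat) (A : tensor C m n) :=
  exists U : nat -> 'I_r -> 'I_m -> 'I_n -> C, tensor_limit (fun k => cp_sum (U k)) A.
Definition has_sym_border (C : numClosedFieldType) (m n : nat) (r : nat) (A : tensor C m n) :=
  exists u : nat -> 'I_r -> 'I_n -> C, tensor_limit (fun k => sym_sum m (u k)) A.
Definition has_vand (C : numClosedFieldType) (m n : nat) (r : nat) (A : tensor C m n) :=
  exists a b : 'I_r -> C, A = vand_sum m n a b.

Definition is_least (P : nat -> Prop) (R : nat) : Prop :=
  P R /\ forall r, P r -> (R <= r)%N.

Definition rank_is (C : numClosedFieldType) m n (A : tensor C m n) R := is_least (fun r => has_cp r A) R.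
Definition srank_is (C : numClosedFieldType) m n (A : tensor C m n) R := is_least (fun r => has_sym r A) R.
Definition brank_is (C : numClosedFieldType) m n (A : tensor C m n) R := is_least (fun r => has_border r A) R.
Definition sbrank_is (C : numClosedFieldType) m n (A : tensor C m n) R := is_least (fun r => has_sym_border r A) R.
Definition vrank_is (C : numClosedFieldType) m n (A : tensor C m n) R := is_least (fun r => has_vand r A) R.

Definition hankel (C : numClosedFieldType) (m n : nat)
  (h : 'I_((n.-1 * m).+1) -> C) : tensor C m n :=
  [ffun idx : {ffun 'I_m -> 'I_n} => h (inord (\sum_(j < m) (idx j : nat)))].

(* polynomials in N variables, as finite lists of (coefficient, exponent) *)
Definition mpoly (C : Type) (N : nat) := seq (C * ('I_N -> nat)).
Definition meval (C : numClosedFieldType) (N : nat) (p : mpoly C N) (x : 'I_N -> C) : C :=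
  \sum_(t <- p) t.1 * \prod_(i < N) x i ^+ t.2 i.

(* P holds generically: outside a proper Zariski-closed subset, i.e. outside
   the zero set of some polynomial that does not vanish identically. *)
Definition generic (C : numClosedFieldType) (N : nat) (P : ('I_N -> C) -> Prop) :=
  exists p : mpoly C N, (exists x, meval p x != 0) /\
    forall x, meval p x != 0 -> P x.

From Pilot Require Import Defs.
From HB Require Import structures.
From mathcomp Require Import all_boot all_order all_algebra.
From mathcomp Require Import separable ring zify.
From Stdlib Require Import FunctionalExtensionality.
Set Implicit Arguments. Unset Strict Implicit. Unset Printing Implicit Defensive.
Import Order.TTheory GRing.Theory Num.Theory.
Local Open Scope ring_scope.

(** Put d = (n-1)m = 2k.  Flattening the first m/2 modes of a Hankel tensor
   against the last m/2 gives the (k+1) x (k+1) catalecticant matrix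
   [h_(a+b)]; a limit of sums of r rank-one tensors flattens to a limit of
   matrices of rank at most r, so a nonzero catalecticant determinant forces
   border rank at least k+1.  Conversely, Prony's method writes a generic
   h_1, ..., h_2k as sum_i u_i t_i^(s-1) with k distinct nonzero nodes t_i,
   the roots of a polynomial whose coefficients solve a k x k Hankel system.
   Choosing a_i^d = u_i / t_i, the k Vandermonde terms (a_i, t_i a_i) match
   every h_s with s >= 1, and one more term (a_0, 0) fixes h_0.  Each
   nondegeneracy condition used is the nonvanishing of a polynomial in h, and
   h = e_k + e_2k satisfies all of them. *)

Section PolynomialFunctions.
Variables (C : numClosedFieldType) (N : nat).
Implicit Types f g : ('I_N -> C) -> C.

Definition polyfun f := exists p : mpoly C N, forall x, meval p x = f x.

Lemma eq_polyfun f g : polyfun f -> f =1 g -> polyfun g.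
Proof. by move=> [p hp] fg; exists p => x; rewrite hp fg. Qed.

Lemma polyfun_cst c : polyfun (fun=> c).
Proof.
exists [:: (c, fun=> 0%N)] => x; rewrite /meval big_seq1 /=.
by rewrite big1 ?mulr1 // => i _; rewrite expr0.
Qed.

Lemma polyfun_coord i : polyfun (fun x => x i).
Proof.
exists [:: (1, fun j => nat_of_bool (j == i))] => x.
rewrite /meval big_seq1 /= mul1r (bigD1 i) //= eqxx expr1.
by rewrite big1 ?mulr1 // => j /negbTE ->; rewrite expr0.
Qed.

Lemma polyfunD f g : polyfun f -> polyfun g -> polyfun (fun x => f x + g x).
Proof.
move=> [p hp] [q hq]; exists (p ++ q) => x.
by rewrite /meval big_cat /= -!/(meval _ _) hp hq.
Qed.

Lemma polyfunM f g : polyfun f -> polyfun g -> polyfun (fun x => f x * g x).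
Proof.
move=> [p hp] [q hq].
exists [seq (t1.1 * t2.1, fun i => (t1.2 i + t2.2 i)%N) | t1 <- p, t2 <- q] => x.
rewrite -hp -hq /meval big_allpairs_dep mulr_suml; apply: eq_bigr => t1 _.
rewrite mulr_sumr; apply: eq_bigr => t2 _ /=.
under eq_bigr do rewrite exprD.
by rewrite big_split /= -!mulrA; congr (_ * _); rewrite mulrCA.
Qed.

Lemma polyfun_sum (I : Type) (r : seq I) (P : pred I) (F : I -> ('I_N -> C) -> C) :
  (forall i, polyfun (F i)) -> polyfun (fun x => \sum_(i <- r | P i) F i x).
Proof.
move=> hF; elim: r => [|i r IH].
  by apply: (eq_polyfun (polyfun_cst 0)) => x; rewrite big_nil.
case hP: (P i).
  by apply: (eq_polyfun (polyfunD (hF i) IH)) => x; rewrite big_cons hP.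
by apply: (eq_polyfun IH) => x; rewrite big_cons hP.
Qed.

Lemma polyfun_prod (I : Type) (r : seq I) (P : pred I) (F : I -> ('I_N -> C) -> C) :
  (forall i, polyfun (F i)) -> polyfun (fun x => \prod_(i <- r | P i) F i x).
Proof.
move=> hF; elim: r => [|i r IH].
  by apply: (eq_polyfun (polyfun_cst 1)) => x; rewrite big_nil.
case hP: (P i).
  by apply: (eq_polyfun (polyfunM (hF i) IH)) => x; rewrite big_cons hP.
by apply: (eq_polyfun IH) => x; rewrite big_cons hP.
Qed.

Lemma polyfun_det n (A : ('I_N -> C) -> 'M[C]_n) :
  (forall i j, polyfun (fun x => A x i j)) -> polyfun (fun x => \det (A x)).
Proof.
move=> hA; apply: polyfun_sum => s.
by apply: polyfunM; [exact: polyfun_cst | apply: polyfun_prod].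
Qed.

Lemma polyfun_coefXnM (P : ('I_N -> C) -> {poly C}) r :
  (forall i, polyfun (fun x => (P x)`_i)) ->
  forall i, polyfun (fun x => ('X^r * P x)`_i).
Proof.
move=> hP i; apply: (@eq_polyfun (fun x => if (i < r)%N then 0 else (P x)`_(i - r))).
  by case: (i < r)%N; [exact: polyfun_cst | exact: hP].
by move=> x; rewrite coefXnM.
Qed.

Lemma polyfun_coef_deriv (P : ('I_N -> C) -> {poly C}) :
  (forall i, polyfun (fun x => (P x)`_i)) ->
  forall i, polyfun (fun x => (P x)^`()`_i).
Proof.
move=> hP i; apply: (eq_polyfun (polyfunM (hP i.+1) (polyfun_cst i.+1%:R))) => x.
by rewrite coef_deriv mulr_natr.
Qed.

Lemma polyfun_generic f (P : ('I_N -> C) -> Prop) :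
  polyfun f -> (exists x, f x != 0) -> (forall x, f x != 0 -> P x) -> generic P.
Proof.
move=> [p hp] [x0 fx0] fP; exists p; split; first by exists x0; rewrite hp.
by move=> x; rewrite hp; apply: fP.
Qed.

End PolynomialFunctions.

Section Limits.
Variable C : numFieldType.
Implicit Types u v : nat -> C.

Definition converges u a := forall eps : C, 0 < eps ->
  exists N : nat, forall k, (N <= k)%N -> `|u k - a| < eps.

Lemma eq_converges u v a : converges u a -> u =1 v -> converges v a.
Proof. by move=> h uv eps /h [N hN]; exists N => k /hN; rewrite uv. Qed.

Lemma converges_subr0 u a : converges (fun k => u k - a) 0 <-> converges u a.
Proof. by split=> h eps /h [N hN]; exists N => k /hN; rewrite subr0. Qed.

Lemma converges_cst c : converges (fun=> c) c.
Proof. by move=> eps he; exists 0%N => k _; rewrite subrr normr0. Qed.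

Lemma converges_cst_eq c a : converges (fun=> c) a -> a = c.
Proof.
move=> h; apply/eqP; rewrite -subr_eq0; apply/negP => /negP ca.
have [|N /(_ N (leqnn N))] := h `|c - a|; first by rewrite distrC normr_gt0.
by rewrite distrC ltxx.
Qed.

Lemma convergesD u v a b : converges u a -> converges v b ->
  converges (fun k => u k + v k) (a + b).
Proof.
move=> hu hv eps he.
have he2 : 0 < eps / 2 by rewrite divr_gt0.
have [N1 h1] := hu _ he2; have [N2 h2] := hv _ he2.
exists (maxn N1 N2) => k; rewrite geq_max => /andP[k1 k2].
rewrite (splitr eps); apply: le_lt_trans (ltrD (h1 _ k1) (h2 _ k2)).
by rewrite opprD addrACA ler_normD.
Qed.

Lemma converges_mul0 u v : converges u 0 -> converges v 0 ->
  converges (fun k => u k * v k) 0.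
Proof.
move=> hu hv eps he.
have [N1 h1] := hu 1 ltr01; have [N2 h2] := hv _ he.
exists (maxn N1 N2) => k; rewrite geq_max => /andP[k1 k2].
move: (h1 _ k1) (h2 _ k2); rewrite !subr0 normrM => u1 veps.
by apply: le_lt_trans veps; rewrite -[leRHS]mul1r ler_wpM2r // ltW.
Qed.

Lemma convergesZ0 c u : converges u 0 -> converges (fun k => c * u k) 0.
Proof.
move=> hu eps he; have [->|c0] := eqVneq c 0.
  by exists 0%N => k _; rewrite mul0r subr0 normr0.
have [|N hN] := hu (eps / `|c|); first by rewrite divr_gt0 ?normr_gt0.
by exists N => k /hN; rewrite !subr0 ltr_pdivlMr ?normr_gt0 // normrM mulrC.
Qed.

Lemma convergesM u v a b : converges u a -> converges v b ->
  converges (fun k => u k * v k) (a * b).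
Proof.
move=> /converges_subr0 hu /converges_subr0 hv; apply/converges_subr0.
have expand k : u k * v k - a * b =
    (u k - a) * (v k - b) + (a * (v k - b) + b * (u k - a)) by ring.
apply: (eq_converges _ (fun k => esym (expand k))).
have -> : (0 : C) = 0 + (0 + 0) by rewrite !addr0.
apply: convergesD (converges_mul0 hu hv) _.
by apply: convergesD; apply: convergesZ0.
Qed.

Lemma converges_sum (I : Type) (r : seq I) (P : pred I) (F : I -> nat -> C) (a : I -> C) :
  (forall i, converges (F i) (a i)) ->
  converges (fun k => \sum_(i <- r | P i) F i k) (\sum_(i <- r | P i) a i).
Proof.
move=> hF; elim: r => [|i r IH].
  by apply: (eq_converges (converges_cst _)) => k; rewrite !big_nil.
rewrite big_cons; case hP: (P i).
  by apply: (eq_converges (convergesD (hF i) IH)) => k; rewrite big_cons hP.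
by apply: (eq_converges IH) => k; rewrite big_cons hP.
Qed.

Lemma converges_prod (I : Type) (r : seq I) (P : pred I) (F : I -> nat -> C) (a : I -> C) :
  (forall i, converges (F i) (a i)) ->
  converges (fun k => \prod_(i <- r | P i) F i k) (\prod_(i <- r | P i) a i).
Proof.
move=> hF; elim: r => [|i r IH].
  by apply: (eq_converges (converges_cst _)) => k; rewrite !big_nil.
rewrite big_cons; case hP: (P i).
  by apply: (eq_converges (convergesM (hF i) IH)) => k; rewrite big_cons hP.
by apply: (eq_converges IH) => k; rewrite big_cons hP.
Qed.

Lemma converges_det n (A : nat -> 'M[C]_n) (B : 'M[C]_n) :
  (forall i j, converges (fun k => A k i j) (B i j)) ->
  converges (fun k => \det (A k)) (\det B).
Proof.
move=> hA; apply: converges_sum => s.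
by apply: convergesM; [exact: converges_cst | apply: converges_prod].
Qed.

End Limits.

Section SylvesterMatrix.
Variables (R : comNzRingType) (i j : nat).

(* Unlike [Sylvester_mx], the size is fixed in advance instead of being read
   off [size p] and [size q], so the entries are polynomial in the coefficients. *)
Definition sylvester_mx (p q : {poly R}) : 'M[R]_(i + j) := \matrix_(r, c)
  if (r < i)%N then ('X^r * p)`_c else ('X^(r - i) * q)`_c.

Lemma det_sylvester_mx_root (p q : {poly R}) z : (0 < i + j)%N ->
  (size p <= j.+1)%N -> (size q <= i.+1)%N -> root p z -> root q z ->
  \det (sylvester_mx p q) = 0.
Proof.
move=> ij_gt0 sp sq /eqP pz /eqP qz.
pose v : 'cV[R]_(i + j) := \col_c z ^+ c.
have Sv : sylvester_mx p q *m v = 0.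
  apply/matrixP => r c0; rewrite !mxE; under eq_bigr => c _ do rewrite !mxE.
  have r_lt := ltn_ord r; case: (ltnP r i) => ri /=.
    rewrite -(@horner_coef_wide _ _ ('X^r * p)) ?hornerM ?hornerXn ?pz ?mulr0 //.
    by apply: leq_trans (size_polyMleq _ _) _; rewrite size_polyXn; lia.
  rewrite -(@horner_coef_wide _ _ ('X^(r - i) * q)) ?hornerM ?hornerXn ?qz ?mulr0 //.
  by apply: leq_trans (size_polyMleq _ _) _; rewrite size_polyXn; lia.
have := congr1 (mulmx (\adj (sylvester_mx p q))) Sv.
rewrite mulmxA mul_adj_mx mul_scalar_mx mulmx0 => /matrixP /(_ (Ordinal ij_gt0) 0).
by rewrite !mxE expr0 mulr1.
Qed.

End SylvesterMatrix.

Lemma power_sum_interpolation (F : fieldType) K (t : 'I_K -> F) (g : nat -> F) :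
  injective t -> exists u : 'I_K -> F, forall s, (s < K)%N -> g s = \sum_i u i * t i ^+ s.
Proof.
move=> t_inj; pose V := Vandermonde K (\row_i t i).
have V_unit : V \in unitmx.
  rewrite unitmxE unitfE det_Vandermonde; apply/prodf_neq0 => i _.
  apply/prodf_neq0 => j ij; rewrite !mxE subr_eq0.
  by apply: contraTneq ij => /t_inj ->; rewrite ltnn.
pose u := invmx V *m \col_(s < K) g s.
exists (fun i => u i 0) => s s_lt.
have /matrixP /(_ (Ordinal s_lt) 0) := mulKVmx V_unit (\col_(s < K) g s).
by rewrite !mxE => <-; apply: eq_bigr => i _; rewrite !mxE mulrC.
Qed.

Section Prony.
Variables (C : numClosedFieldType) (k1 : nat).
Local Notation k := k1.+1.
Implicit Types h : nat -> C.

Definition prony_mx h : 'M[C]_k := \matrix_(i, j) h (i + (k - j))%N.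
Definition prony_rhs h : 'cV[C]_k := \col_i h (i + k).+1.
Definition prony_den h := \det (prony_mx h).
(* Cramer's rule with the denominator [prony_den h] cleared, so that the
   entries stay polynomial in [h]. *)
Definition prony_num h : 'cV[C]_k := \adj (prony_mx h) *m prony_rhs h.

Definition prony_tail h : {poly C} := \sum_(j < k) prony_num h j 0 *: 'X^(k1 - j).
Definition prony_poly h : {poly C} := prony_den h *: 'X^k - prony_tail h.

Definition prony_sylvester h := sylvester_mx k1 k (prony_poly h) (prony_poly h)^`().

Lemma prony_mx_num h : prony_mx h *m prony_num h = prony_den h *: prony_rhs h.
Proof. by rewrite mulmxA mul_mx_adj mul_scalar_mx. Qed.

Lemma prony_recurrence h i : (i < k)%N ->
  prony_den h * h (i + k).+1 = \sum_(j < k) prony_num h j 0 * h (i + (k - j))%N.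
Proof.
move=> i_lt; have /matrixP /(_ (Ordinal i_lt) 0) := prony_mx_num h.
by rewrite !mxE => <-; apply: eq_bigr => j _; rewrite !mxE mulrC.
Qed.

Lemma horner_prony_poly h t : (prony_poly h).[t] =
  prony_den h * t ^+ k - \sum_(j < k) prony_num h j 0 * t ^+ (k1 - j).
Proof.
rewrite hornerD hornerN hornerZ hornerXn horner_sum.
by under eq_bigr => j _ do rewrite hornerZ hornerXn.
Qed.

Lemma coef0_prony_poly h : (prony_poly h)`_0 = - prony_num h ord_max 0.
Proof.
rewrite coefB coefZ coefXn mulr0 sub0r coef_sumMXn (big_pred1 ord_max) // => j /=.
by rewrite subn_eq0 -val_eqE /= eqn_leq -[(j <= k1)%N]ltnS ltn_ord.
Qed.

Lemma size_prony_tail h : (size (prony_tail h) <= k)%N.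
Proof.
apply: leq_trans (size_sum _ _ _) _; apply/bigmax_leqP => j _.
by apply: leq_trans (size_scale_leq _ _) _; rewrite size_polyXn ltnS leq_subr.
Qed.

Lemma size_prony_poly h : (size (prony_poly h) <= k.+1)%N.
Proof.
apply: leq_trans (size_polyD _ _) _; rewrite size_polyN geq_max.
by rewrite (leq_trans (size_prony_tail h)) // (leq_trans (size_scale_leq _ _)) ?size_polyXn.
Qed.

Lemma lead_coef_prony_poly h : prony_den h != 0 ->
  size (prony_poly h) = k.+1 /\ lead_coef (prony_poly h) = prony_den h.
Proof.
move=> D_neq0; have size_DXk : size (prony_den h *: 'X^k) = k.+1.
  by rewrite size_scale // size_polyXn.
have lt_tail : (size (- prony_tail h) < size (prony_den h *: 'X^k))%N.
  by rewrite size_polyN size_DXk ltnS size_prony_tail.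
by rewrite /prony_poly size_polyDl // lead_coefDl // lead_coefZ lead_coefXn mulr1.
Qed.

Lemma prony_poly_separable h :
  \det (prony_sylvester h) != 0 -> separable_poly (prony_poly h).
Proof.
apply: contraR; rewrite unlock coprimep_def => /closed_rootP [z].
rewrite root_gcd => /andP[Qz Q'z]; apply/eqP.
apply: det_sylvester_mx_root Qz Q'z; [by rewrite addnS | exact: size_prony_poly |].
have [->|Q_neq0] := eqVneq (prony_poly h) 0; first by rewrite deriv0 size_poly0.
by rewrite -ltnS (leq_trans (lt_size_deriv Q_neq0)) ?size_prony_poly.
Qed.

Lemma root_prony_poly_rec h t s : root (prony_poly h) t ->
  prony_den h * t ^+ (s + k) = \sum_(j < k) prony_num h j 0 * t ^+ (s + (k1 - j)).
Proof.
rewrite rootE horner_prony_poly subr_eq0 => /eqP Qt.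
rewrite exprD mulrCA Qt mulr_sumr; apply: eq_bigr => j _.
by rewrite exprD mulrCA.
Qed.

Lemma prony_roots h : prony_den h != 0 -> \det (prony_sylvester h) != 0 ->
    prony_num h ord_max 0 != 0 ->
  exists t : 'I_k -> C,
    [/\ injective t, forall i, t i != 0 & forall i, root (prony_poly h) (t i)].
Proof.
move=> D_neq0 S_neq0 e_neq0.
have [size_Q lead_Q] := lead_coef_prony_poly D_neq0.
have [rs Q_eq] := closed_field_poly_normal (prony_poly h).
rewrite lead_Q in Q_eq.
have size_rs : size rs = k.
  by move: size_Q; rewrite Q_eq size_scale // size_prod_XsubC => -[].
have rs_uniq : uniq rs.
  have := prony_poly_separable S_neq0; rewrite Q_eq.
  by rewrite (eqp_separable (eqp_scale _ D_neq0)) separable_prod_XsubC.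
have rs_root z : z \in rs -> root (prony_poly h) z.
  by move=> z_rs; rewrite Q_eq rootZ // root_prod_XsubC.
have rs_mem (i : 'I_k) : rs`_i \in rs by rewrite mem_nth ?size_rs.
exists (fun i => rs`_i); split=> [i j /eqP|i|i]; last exact: rs_root.
  by rewrite nth_uniq ?size_rs // => /eqP /val_inj.
apply: contraNneq e_neq0 => rs_i0; have := rs_root _ (rs_mem i).
by rewrite rs_i0 rootE horner_coef0 coef0_prony_poly oppr_eq0.
Qed.

Lemma prony_power_sums h : prony_den h != 0 -> \det (prony_sylvester h) != 0 ->
    prony_num h ord_max 0 != 0 ->
  exists t u : 'I_k -> C, (forall i, t i != 0) /\
    forall s, (s < k.*2)%N -> h s.+1 = \sum_i u i * t i ^+ s.
Proof.
move=> D_neq0 S_neq0 e_neq0.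
have [t [t_inj t_neq0 t_root]] := prony_roots D_neq0 S_neq0 e_neq0.
have [u hu] := power_sum_interpolation (fun s => h s.+1) t_inj.
exists t, u; split=> //; elim/ltn_ind => s IH s_lt.
have [/hu //|k_le_s] := ltnP s k.
have s_eq : s = (s - k + k)%N by rewrite subnK.
apply: (mulfI D_neq0); rewrite s_eq prony_recurrence; last lia.
transitivity (\sum_(j < k) prony_num h j 0 * \sum_l u l * t l ^+ (s - k + (k1 - j))).
  apply: eq_bigr => j _; have := ltn_ord j => j_lt.
  have -> : (s - k + (k - j) = (s - k + (k1 - j)).+1)%N by lia.
  by rewrite IH //; lia.
under eq_bigr => j _ do rewrite mulr_sumr.
rewrite exchange_big mulr_sumr /=.
apply: eq_bigr => l _; rewrite mulrCA root_prony_poly_rec // mulr_sumr.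
by apply: eq_bigr => j _; rewrite mulrCA.
Qed.

End Prony.

(* Columns are reversed so that the witness below makes it triangular. *)
Definition catalecticant (R : Type) K (h : nat -> R) : 'M[R]_K.+1 :=
  \matrix_(a, b) h (a + (K - b))%N.

Definition hankel_nondeg (C : numClosedFieldType) k1 (h : nat -> C) : C :=
  \det (catalecticant k1.+1 h) * prony_den k1 h * \det (prony_sylvester k1 h) *
  prony_num k1 h ord_max 0.

Lemma hankel_nondeg_neq0 (C : numClosedFieldType) k1 (h : nat -> C) :
  hankel_nondeg k1 h != 0 ->
  [/\ \det (catalecticant k1.+1 h) != 0, prony_den k1 h != 0,
      \det (prony_sylvester k1 h) != 0 & prony_num k1 h ord_max 0 != 0].
Proof. by rewrite !mulf_eq0 !negb_or => /andP[/andP[/andP[-> ->] ->] ->]. Qed.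

Section PolynomialDependence.
Variables (C : numClosedFieldType) (k1 N : nat) (H : ('I_N -> C) -> nat -> C).
Hypothesis H_poly : forall s, polyfun (H^~ s).
Local Notation k := k1.+1.

Lemma polyfun_prony_den : polyfun (fun x => prony_den k1 (H x)).
Proof. by apply: polyfun_det => i j; apply: (eq_polyfun (H_poly _)) => x; rewrite mxE. Qed.

Lemma polyfun_prony_num j : polyfun (fun x => prony_num k1 (H x) j 0).
Proof.
apply: (@eq_polyfun _ _ (fun x => \sum_(l < k) (-1) ^+ (l + j) *
    \det (row' l (col' j (prony_mx k1 (H x)))) * prony_rhs k1 (H x) l 0)).
  apply: polyfun_sum => l; apply: polyfunM; last first.
    by apply: (eq_polyfun (H_poly _)) => x; rewrite mxE.
  apply: polyfunM; first exact: polyfun_cst.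
  by apply: polyfun_det => a b; apply: (eq_polyfun (H_poly _)) => x; rewrite !mxE.
by move=> x; rewrite mxE; apply: eq_bigr => l _; rewrite !mxE.
Qed.

Lemma polyfun_coef_prony_poly i : polyfun (fun x => (prony_poly k1 (H x))`_i).
Proof.
apply: (@eq_polyfun _ _ (fun x => prony_den k1 (H x) * (i == k)%:R -
    \sum_(j < k | (k1 - j == i)%N) prony_num k1 (H x) j 0)).
  apply: polyfunD; first exact: polyfunM polyfun_prony_den (polyfun_cst _ _).
  apply: (eq_polyfun (polyfunM (polyfun_cst _ (-1)) (polyfun_sum _ _ polyfun_prony_num))).
  by move=> x; rewrite mulN1r.
by move=> x; rewrite coefB coefZ coefXn coef_sumMXn.
Qed.

Lemma polyfun_hankel_nondeg : polyfun (fun x => hankel_nondeg k1 (H x)).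
Proof.
have cat_poly : polyfun (fun x => \det (catalecticant k (H x))).
  by apply: polyfun_det => a b; apply: (eq_polyfun (H_poly _)) => x; rewrite mxE.
have syl_poly : polyfun (fun x => \det (prony_sylvester k1 (H x))).
  apply: polyfun_det => r c; rewrite /prony_sylvester.
  case: (ltnP r k1) => r_lt.
    apply: (eq_polyfun (polyfun_coefXnM r polyfun_coef_prony_poly c)).
    by move=> x; rewrite mxE r_lt.
  have coef_deriv_poly := polyfun_coef_deriv polyfun_coef_prony_poly.
  apply: (eq_polyfun (polyfun_coefXnM (r - k1) coef_deriv_poly c)).
  by move=> x; rewrite mxE ltnNge r_lt.
exact: polyfunM (polyfunM (polyfunM cat_poly polyfun_prony_den) syl_poly)
  (polyfun_prony_num _).
Qed.

End PolynomialDependence.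

Section Witness.
Variables (C : numClosedFieldType) (k1 : nat).
Local Notation k := k1.+1.

Definition hankel_witness (s : nat) : C := (s == k)%:R + (s == k.*2)%:R.

Lemma hankel_witness_small s : (s < k)%N -> hankel_witness s = 0.
Proof.
move=> s_lt; have s_lt2 : (s < k.*2)%N by lia.
by rewrite /hankel_witness (ltn_eqF s_lt) (ltn_eqF s_lt2) addr0.
Qed.

Lemma det_hankel_witness K : (K <= k.+1)%N ->
  \det (\matrix_(a < K, b < K) hankel_witness (a + (k - b))) = 1.
Proof.
move=> K_le; rewrite det_trig; last first.
  apply/is_trig_mxP => a b ab; rewrite mxE hankel_witness_small //.
  by have := ltn_ord b; lia.
rewrite big1 // => a _; rewrite mxE subnKC; last by have := ltn_ord a; lia.
by rewrite /hankel_witness eqxx (_ : (k == k.*2) = false) ?addr0 //; apply/eqP; lia.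
Qed.

Lemma prony_num_witness : prony_num k1 hankel_witness = \col_j (j == ord_max)%:R.
Proof.
set e := \col_j _.
have De : prony_den k1 hankel_witness = 1 by apply: det_hankel_witness.
have Me : prony_mx k1 hankel_witness *m e = prony_rhs k1 hankel_witness.
  apply/matrixP => i z; rewrite !mxE (bigD1 ord_max) //= big1 ?addr0; last first.
    by move=> j /negbTE j_max; rewrite !mxE j_max mulr0.
  rewrite !mxE eqxx mulr1 subSnn /hankel_witness; have := ltn_ord i => i_lt.
  have -> : (i + 1 == k)%N = (i == k1 :> nat) by rewrite addn1 eqSS.
  have -> : ((i + k).+1 == k.*2)%N = (i == k1 :> nat) by apply/eqP/eqP; lia.
  have i1_lt : (i + 1 < k.*2)%N by lia.
  have k_lt : (k < (i + k).+1)%N by lia.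
  by rewrite (ltn_eqF i1_lt) (gtn_eqF k_lt) addr0 add0r.
by rewrite /prony_num -Me mulmxA mul_adj_mx -/(prony_den k1 _) De mul1mx.
Qed.

Lemma prony_poly_witness : prony_poly k1 hankel_witness = 'X^k - 1.
Proof.
rewrite /prony_poly /prony_tail prony_num_witness (bigD1 ord_max) //= big1; last first.
  by move=> j /negbTE j_max; rewrite mxE j_max scale0r.
rewrite mxE eqxx subnn expr0 scale1r addr0.
by congr (_ - _); rewrite -[RHS]scale1r; congr (_ *: _); apply: det_hankel_witness.
Qed.

Lemma det_prony_sylvester_witness : \det (prony_sylvester k1 hankel_witness) != 0.
Proof.
rewrite /prony_sylvester prony_poly_witness derivB derivXn derivC subr0 -det_tr.
rewrite det_trig; last first.
  apply/is_trig_mxP => i j ij; rewrite !mxE coefXnM.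
  case: ifP => _; first by rewrite ij.
  rewrite coefXnM; case: ifP => // /negbT i_ge; rewrite coefMn coefXn /=.
  by rewrite (_ : (i - (j - k1) == k1)%N = false) ?mul0rn //; apply/negbTE/eqP; lia.
apply/prodf_neq0 => i _; rewrite !mxE coefXnM ltnn subnn.
case: ifP => i_lt.
  by rewrite coefB coefXn coefC /= sub0r oppr_eq0 oner_eq0.
rewrite coefXnM ltnNge leq_subr /= coefMn coefXn /=.
by rewrite (_ : (i - (i - k1) == k1)%N) ?pnatr_eq0 //; apply/eqP; move/negbT: i_lt; lia.
Qed.

Lemma hankel_nondeg_witness : hankel_nondeg k1 hankel_witness != 0.
Proof.
rewrite /hankel_nondeg /catalecticant /prony_den /prony_mx.
rewrite (det_hankel_witness (leqnn _)) (det_hankel_witness (leqnSn _)).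
rewrite prony_num_witness mxE eqxx !mul1r mulr1; exact: det_prony_sylvester_witness.
Qed.

End Witness.

Section VandermondeDecomposition.
Variables (C : numClosedFieldType) (m n : nat).
Local Notation d := (n.-1 * m)%N.

Lemma ord_leq_pred (i : 'I_n) : (i <= n.-1)%N.
Proof. by have := ltn_ord i; lia. Qed.

Lemma sum_ord_leq_pred (idx : {ffun 'I_m -> 'I_n}) : (\sum_(j < m) idx j <= d)%N.
Proof.
apply: leq_trans (leq_sum _ (fun j _ => ord_leq_pred (idx j))) _.
by rewrite sum_nat_const card_ord mulnC.
Qed.

Lemma prod_vand_vec (a b : C) (idx : {ffun 'I_m -> 'I_n}) :
  \prod_(j < m) vand_vec a b (idx j) =
  a ^+ (d - \sum_(j < m) idx j) * b ^+ (\sum_(j < m) idx j).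
Proof.
rewrite big_split /= !prodrXr; congr (a ^+ _ * _).
apply/eqP; rewrite -(eqn_add2r (\sum_(j < m) idx j)) subnK ?sum_ord_leq_pred //.
rewrite -big_split /= (eq_bigr (fun=> n.-1)) => [|j _]; last by rewrite subnK ?ord_leq_pred.
by rewrite sum_nat_const card_ord mulnC.
Qed.

(* The last summand (a0, 0) only contributes to the entry h_0. *)
Lemma has_vand_hankel K (h : 'I_d.+1 -> C) (t u : 'I_K -> C) :
  (0 < d)%N -> (forall i, t i != 0) ->
  (forall s, (s < d)%N -> h (inord s.+1) = \sum_i u i * t i ^+ s) ->
  has_vand K.+1 (hankel h).
Proof.
move=> d_gt0 t_neq0 h_sums.
pose a i := d.-root (u i / t i).
pose a0 := d.-root (h (inord 0) - \sum_i u i / t i).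
have a_d i : a i ^+ d = u i / t i by rewrite rootCK.
exists (fun i : 'I_K.+1 => if insub (i : nat) is Some j then a j else a0).
exists (fun i : 'I_K.+1 => if insub (i : nat) is Some j then t j * a j else 0).
apply/ffunP => idx; rewrite /vand_sum /sym_sum /cp_sum !ffunE; apply/esym.
under eq_bigr => i _ do rewrite prod_vand_vec.
rewrite big_ord_recr /= insubN ?ltnn //.
under eq_bigr => i _ do rewrite valK exprMn mulrCA -exprD subnK ?sum_ord_leq_pred // a_d.
case: (\sum_(j < m) idx j)%N (sum_ord_leq_pred idx) => [|s] s_le.
  rewrite subn0 rootCK // expr0 mulr1.
  by under eq_bigr do rewrite expr0 mul1r; rewrite addrC subrK.
rewrite expr0n /= mulr0 addr0 h_sums //; apply: eq_bigr => i _.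
by rewrite exprS mulrC mulrA divfK.
Qed.

End VandermondeDecomposition.

Section Flattening.
Variables (C : numClosedFieldType) (n1 p k : nat).
Hypothesis k_eq : (n1 * p)%N = k.
Local Notation n := n1.+1.
Local Notation m := p.*2.

(* [flat_index a b] spreads a total of [a] greedily over the first [p] modes
   and a total of [b] over the last [p] modes. *)
Definition digit (a j : nat) : nat := minn n1 (a - n1 * j).

Lemma sum_digit q a : (a <= n1 * q)%N -> (\sum_(j < q) digit a j)%N = a.
Proof.
elim: q a => [|q IH] a a_le; first by rewrite big_ord0; lia.
rewrite big_ord_recl (eq_bigr (fun j : 'I_q => digit (a - n1) j)) => [|j _]; last first.
  by rewrite /digit /bump /= mulnDr muln1 subnDA.
rewrite IH /digit ?muln0; first lia.
by move: a_le; rewrite mulnS; move: (n1 * q)%N => N; lia.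
Qed.

Definition flat_index (a b : nat) : {ffun 'I_m -> 'I_n} :=
  [ffun j : 'I_m => inord (if (j < p)%N then digit a j else digit b (j - p))].

Lemma sum_flat_index a b : (a <= k)%N -> (b <= k)%N ->
  (\sum_(j < m) flat_index a b j)%N = (a + b)%N.
Proof.
move=> a_le b_le; pose f j := if (j < p)%N then digit a j else digit b (j - p).
rewrite (eq_bigr (fun j : 'I_m => f j)) => [|j _]; last first.
  by rewrite ffunE inordK // ltnS /f; case: ifP => _; apply: geq_minl.
rewrite -(big_mkord xpredT f) -addnn (big_cat_nat _ (leq_addr p p)) //=.
rewrite (big_addn 0 (p + p) p) addnK.
rewrite (@eq_big_nat _ _ _ 0 p _ (digit a)) => [|j /andP[_ j_lt]]; last by rewrite /f j_lt.
rewrite [X in (_ + X)%N](eq_big_nat _ _ (F2 := digit b)) => [|j _]; last first.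
  by rewrite /f ltnNge leq_addl /= addnK.
by rewrite !big_mkord !sum_digit ?k_eq.
Qed.

Definition flattening (A : tensor C m n) : 'M[C]_k.+1 :=
  \matrix_(a, b) A (flat_index a (k - b)).

Lemma flattening_hankel (h : 'I_((n.-1 * m).+1) -> C) :
  flattening (hankel h) = catalecticant k (fun s => h (inord s)).
Proof.
apply/matrixP => a b; rewrite !mxE ffunE sum_flat_index // ?leq_subr //.
by rewrite -ltnS.
Qed.

Lemma flattening_cp_sum r (U : 'I_r -> 'I_m -> 'I_n -> C) :
  flattening (cp_sum U) =
  (\matrix_(a < k.+1, i < r) \prod_(j < m | (j < p)%N) U i j (flat_index a 0 j)) *m
  (\matrix_(i < r, b < k.+1) \prod_(j < m | ~~ (j < p)%N) U i j (flat_index 0 (k - b) j)).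
Proof.
apply/matrixP => a b; rewrite !mxE ffunE; apply: eq_bigr => i _; rewrite !mxE.
rewrite (bigID (fun j : 'I_m => (j < p)%N)) /=; congr (_ * _); apply: eq_bigr => j j_p;
  by rewrite !ffunE ?j_p ?(negbTE j_p).
Qed.

Lemma det_flattening_cp_sum r (U : 'I_r -> 'I_m -> 'I_n -> C) :
  (r < k.+1)%N -> \det (flattening (cp_sum U)) = 0.
Proof.
rewrite flattening_cp_sum; set X := \matrix_(a, i) _; set Y := \matrix_(i, b) _.
move=> r_lt; apply/eqP; apply: contraTT r_lt => XY_unit; rewrite -leqNgt.
rewrite -(@mxrank_unit _ _ (X *m Y)) ?unitmxE ?unitfE //.
exact: leq_trans (mxrankM_maxl _ _) (rank_leq_col _).
Qed.

Lemma border_rank_ge_flattening (A : tensor C m n) r :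
  \det (flattening A) != 0 -> has_border r A -> (k.+1 <= r)%N.
Proof.
move=> det_neq0 [U U_lim]; rewrite leqNgt; apply: contra det_neq0 => r_lt.
apply/eqP/converges_cst_eq.
apply: (eq_converges (converges_det (A := fun l => flattening (cp_sum (U l))) _)).
  by move=> a b; rewrite mxE => eps /U_lim [N hN]; exists N => l /hN; rewrite mxE.
by move=> l; rewrite det_flattening_cp_sum.
Qed.

End Flattening.

Section RankComparisons.
Variables (C : numClosedFieldType) (m n : nat).
Implicit Types (A : tensor C m n) (r : nat).

Lemma has_vand_sym r A : has_vand r A -> Defs.has_sym r A.
Proof. by move=> [a [b ->]]; exists (fun i => vand_vec (a i) (b i)). Qed.

Lemma has_sym_cp r A : Defs.has_sym r A -> has_cp r A.
Proof. by move=> [u ->]; exists (fun i _ => u i). Qed.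

Lemma has_cp_border r A : has_cp r A -> has_border r A.
Proof.
by move=> [U ->]; exists (fun=> U) => eps eps_gt0; exists 0%N => l _ idx; rewrite subrr normr0.
Qed.

Lemma has_sym_sym_border r A : Defs.has_sym r A -> has_sym_border r A.
Proof.
by move=> [u ->]; exists (fun=> u) => eps eps_gt0; exists 0%N => l _ idx; rewrite subrr normr0.
Qed.

Lemma has_sym_border_border r A : has_sym_border r A -> has_border r A.
Proof. by move=> [u u_lim]; exists (fun l i _ => u l i). Qed.

Lemma ranks_eq_of_bounds A R : has_vand R A -> (forall r, has_border r A -> (R <= r)%N) ->
  [/\ rank_is A R, srank_is A R, brank_is A R, sbrank_is A R & vrank_is A R].
Proof.
move=> vR border_ge; have sR := has_vand_sym vR; have cR := has_sym_cp sR.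
split; split=> [|r]; try by [|exact: has_cp_border|exact: has_sym_sym_border].
- by move/has_cp_border/border_ge.
- by move/has_sym_cp/has_cp_border/border_ge.
- exact: border_ge.
- by move/has_sym_border_border/border_ge.
- by move/has_vand_sym/has_sym_cp/has_cp_border/border_ge.
Qed.

End RankComparisons.

Lemma hankel_nondeg_witness_inord (C : numClosedFieldType) k1 d : d = k1.+1.*2 ->
  hankel_nondeg k1 (fun s => hankel_witness C k1 (@inord d s)) != 0.
Proof.
move=> ->; have E : (fun s => hankel_witness C k1 (@inord (k1.+1.*2) s)) = hankel_witness C k1.
  apply: functional_extensionality => s; have [s_le|s_gt] := leqP s k1.+1.*2.
    by rewrite inordK.
  rewrite (_ : inord s = ord0); last first.
    by apply: val_inj; rewrite /= /inord /insubd insubN // -ltnNge.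
  have s_gt1 : (k1.+1 < s)%N by lia.
  by rewrite hankel_witness_small // /hankel_witness (gtn_eqF s_gt) (gtn_eqF s_gt1) addr0.
by rewrite E; apply: hankel_nondeg_witness.
Qed.

Section GenericHankel.
Variables (C : numClosedFieldType) (n1 p k1 : nat).
Hypothesis k_eq : (n1 * p)%N = k1.+1.
Local Notation n := n1.+1.
Local Notation m := p.*2.

Lemma hankel_degree : (n.-1 * m = k1.+1.*2)%N.
Proof. by rewrite /= -doubleMr k_eq. Qed.

Variable h : 'I_((n.-1 * m).+1) -> C.
Hypothesis h_nondeg : hankel_nondeg k1 (fun s => h (inord s)) != 0.

Lemma hankel_has_vand : has_vand k1.+2 (hankel h).
Proof.
have [_ D_neq0 S_neq0 e_neq0] := hankel_nondeg_neq0 h_nondeg.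
have [t [u [t_neq0 h_sums]]] := prony_power_sums D_neq0 S_neq0 e_neq0.
apply: has_vand_hankel _ t_neq0 _ => [|s s_lt]; first by rewrite hankel_degree.
by rewrite (h_sums s) // -hankel_degree.
Qed.

Lemma hankel_border_rank_ge r : has_border r (hankel h) -> (k1.+2 <= r)%N.
Proof.
have [cat_neq0 _ _ _] := hankel_nondeg_neq0 h_nondeg.
by apply: border_rank_ge_flattening; rewrite (flattening_hankel k_eq).
Qed.

End GenericHankel.

Theorem corollary4p3 (C : numClosedFieldType) (m n : nat) :
  ~~ odd m -> (0 < m)%N -> (2 <= n)%N ->
  generic (fun h : 'I_((n.-1 * m).+1) -> C =>
    let H := @hankel C m n h in
    let R := (1 + (n.-1 * m) %/ 2)%N in
    [/\ rank_is H R, srank_is H R, brank_is H R, sbrank_is H R & vrank_is H R]).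
Proof.
move=> m_even m_gt0 n_ge2.
have [p -> p_gt0] : exists2 p, m = p.*2 & (0 < p)%N by exists m./2; [rewrite even_halfK | lia].
have [n1 -> n1_gt0] : exists2 n1, n = n1.+1 & (0 < n1)%N by exists n.-1; lia.
have [k1 k_eq] : exists k1, (n1 * p = k1.+1)%N by exists (n1 * p).-1; lia.
rewrite [X in (1 + X %/ 2)%N](hankel_degree k_eq) divn2 doubleK add1n.
apply: (polyfun_generic (f := fun h => hankel_nondeg k1 (fun s => h (inord s)))).
- by apply: polyfun_hankel_nondeg => s; apply: polyfun_coord.
- exists (fun i => hankel_witness C k1 i).
  exact: hankel_nondeg_witness_inord (hankel_degree k_eq).
move=> h h_nondeg; apply: ranks_eq_of_bounds.
- exact: hankel_has_vand.
- exact: hankel_border_rank_ge.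
Qed.
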